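(* If $\mathcal{F}$ is a finitary argumentation framework, then there exists a $\mathit{cf1.5}$ extension of $\mathcal{F}$, i.e., $\mathit{cf1.5}(\mathcal{F})\neq\emptyset$.
   Context: An argumentation framework (AF) is $\mathcal{F}=(A_{\mathcal{F}},R_{\mathcal{F}})$ with $R_{\mathcal{F}}\subseteq A_{\mathcal{F}}\times A_{\mathcal{F}}$ (possibly infinite); $a\rightarrow b$ means $(a,b)\in R_{\mathcal{F}}$. $\mathcal{F}$ is finitary if each argument is attacked by only finitely many arguments. $\mathcal{F}|_S=(A_{\mathcal{F}}\cap S,R_{\mathcal{F}}\cap(S\times S))$. $S$ is conflict-free if no $a,b\in S$ have $a\rightarrow b$; a naive extension is a $\subseteq$-maximal conflict-free set. $\mathrm{SCC}(\mathcal{F})$ is the set of strongly connected components of the attack graph (where $b$ is in the component of $a$ iff there are directed attack paths, possibly of length 0, from $a$ to $b$ and from $b$ to $a$). For $X,S\subseteq A_{\mathcal{F}}$, $D_S(X)=\{b\in X:\exists a\in S\setminus X,\ a\rightarrow b\}$. $S\in\mathit{cf1.5}(\mathcal{F})$ iff $S$ is conflict-free and for each $X\in\mathrm{SCC}(\mathcal{F})$, $S\cap X$ is a naive extension of $\mathcal{F}|_{X\setminus D_S(X)}$. *)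

(* An argumentation framework is a (possibly infinite) type A of
   arguments with an attack relation R : A -> A -> Prop; sets are predicates. *)
From Stdlib Require Import List Relations.

Definition set (A : Type) := A -> Prop.

Section AF.
Context {A : Type} (R : A -> A -> Prop).

Definition finitary : Prop :=
  forall b : A, exists l : list A, forall a : A, R a b -> In a l.

Definition subset (S T : set A) : Prop := forall x, S x -> T x.

(* S conflict-free w.r.t. the attack relation R restricted to Y
   (the restriction F|_Y has arguments Y and attacks R ∩ (Y × Y)) *)
Definition conflict_free_in (Y S : set A) : Prop :=
  subset S Y /\ forall a b, S a -> S b -> Y a -> Y b -> ~ R a b.

Definition conflict_free (S : set A) : Prop :=
  forall a b, S a -> S b -> ~ R a b.

Definition naive_in (Y S : set A) : Prop :=
  conflict_free_in Y S /\
  forall T, conflict_free_in Y T -> subset S T -> subset T S.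

Definition reach (a b : A) : Prop := clos_refl_trans A R a b.

Definition is_SCC (X : set A) : Prop :=
  exists a : A, forall b, X b <-> (reach a b /\ reach b a).

Definition D (S X : set A) : set A :=
  fun b => X b /\ exists a, S a /\ ~ X a /\ R a b.

Definition cf15 (S : set A) : Prop :=
  conflict_free S /\
  forall X, is_SCC X ->
    naive_in (fun b => X b /\ ~ D S X b) (fun b => S b /\ X b).

End AF.

(* Fix an enumeration of every SCC; SCCs are countable because the framework
   is finitary.  Call b eligible for a choice s : A -> bool when b does not
   attack itself, no chosen attacker of b lies in another SCC, and b conflicts
   with no chosen argument enumerated before it in its own SCC.  A fixpoint
   (s b = true exactly when b is eligible for s) is a cf1.5 extension: inside
   each SCC it is the greedy, hence maximal, conflict-free choice among the
   arguments not attacked from outside.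
   Eligibility of b reads s only at finitely many arguments, all strictly
   below b in the order "earlier SCC, or same SCC and enumerated earlier".  So
   finitely many fixpoint conditions can be met by deciding arguments bottom-up,
   and compactness of {0,1}^A yields a global fixpoint.  Compactness is needed
   because the order of the SCCs need not be well founded. *)

From Stdlib Require Import List Relations.
From Stdlib Require Import Classical ClassicalEpsilon FunctionalExtensionality PropExtensionality Lia Cantor.
From mathcomp Require classical_sets.
Import ListNotations.
Set Bullet Behavior "Strict Subproofs".

Lemma exists_filter {T : Type} (P : T -> Prop) (l : list T) :
  exists l', forall x, In x l' <-> In x l /\ P x.
Proof.
  induction l as [|y l [l' Hl']].
  - exists []; simpl; tauto.
  - destruct (classic (P y)) as [Py|nPy].
    + exists (y :: l'); intros x; simpl; rewrite Hl'.
      split; [intros [<-|?]|intros [[<-|?] ?]]; tauto.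
    + exists l'; intros x; simpl; rewrite Hl'.
      split; [tauto|intros [[<-|?] ?]; tauto].
Qed.

Lemma chain_bound_list {T : Type} (F : (T -> Prop) -> Prop)
  (F_chain : forall X Y, F X -> F Y -> subset X Y \/ subset Y X) (l : list T) :
  (forall x, In x l -> exists2 X, F X & X x) ->
  l = [] \/ exists2 X, F X & forall x, In x l -> X x.
Proof.
  induction l as [|y l IH]; intros Hl; [now left|right].
  destruct (Hl y (or_introl eq_refl)) as [Y FY Yy].
  destruct IH as [->|[X FX HX]]; [intros x Hx; apply Hl; now right| |].
  - exists Y; [exact FY|]. intros x [<-|[]]; exact Yy.
  - destruct (F_chain X Y FX FY) as [XY|YX].
    + exists Y; [exact FY|]. intros x [<-|Hx]; auto.
    + exists X; [exact FX|]. intros x [<-|Hx]; auto.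
Qed.

Section Compactness.
Variables (V I : Type) (G : (V -> bool) -> I -> Prop) (support : I -> list V).
Hypothesis G_local :
  forall s t i, (forall x, In x (support i) -> s x = t x) -> G s i -> G t i.
Hypothesis G_finitely_satisfiable :
  forall li : list I, exists s, forall i, In i li -> G s i.

(* [L] is a set of literals: [(x, v)] requires [x] to take the value [v]. *)
Definition finitely_consistent (L : V * bool -> Prop) : Prop :=
  forall (li : list I) (lp : list (V * bool)), exists s : V -> bool,
    (forall p, In p lp -> L p -> s (fst p) = snd p) /\ forall i, In i li -> G s i.

Lemma finitely_consistent_chain_union (F : (V * bool -> Prop) -> Prop) :
  (forall L, F L -> finitely_consistent L) ->
  (forall L L', F L -> F L' -> subset L L' \/ subset L' L) ->
  finitely_consistent (fun p => exists2 L, F L & L p).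
Proof.
  intros F_cons F_chain li lp.
  destruct (exists_filter (fun p => exists2 L, F L & L p) lp) as [lp' Hlp'].
  destruct (chain_bound_list F F_chain lp') as [Hnil|[L FL HL]].
  - intros p Hp; apply Hlp'; exact Hp.
  - destruct (G_finitely_satisfiable li) as [s Hs].
    exists s; split; [|exact Hs].
    intros p Hp Up; exfalso.
    assert (Hp' : In p lp') by (apply Hlp'; auto).
    rewrite Hnil in Hp'; exact Hp'.
  - destruct (F_cons L FL li lp) as [s [Hagree HG]].
    exists s; split; [|exact HG].
    intros p Hp Up; apply Hagree; [exact Hp|apply HL, Hlp'; auto].
Qed.

Lemma finitely_consistent_extend L x :
  finitely_consistent L ->
  exists v, finitely_consistent (fun p => L p \/ p = (x, v)).
Proof.
  intros HL. apply NNPP; intros Hno.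
  assert (Hbad : forall v, exists li lp, forall s,
    ~ ((forall p, In p lp -> L p \/ p = (x, v) -> s (fst p) = snd p) /\
       forall i, In i li -> G s i)).
  { intros v.
    destruct (not_all_ex_not _ _ (not_ex_all_not _ _ Hno v)) as [li Hli].
    destruct (not_all_ex_not _ _ Hli) as [lp Hlp].
    exists li, lp; intros s Hs; apply Hlp; exists s; exact Hs. }
  destruct (Hbad true) as [li1 [lp1 H1]], (Hbad false) as [li2 [lp2 H2]].
  destruct (HL (li1 ++ li2) (lp1 ++ lp2)) as [s [Hagree HG]].
  assert (s_meets : forall (lp : list (V * bool)) li,
    incl lp (lp1 ++ lp2) -> incl li (li1 ++ li2) ->
    (forall p, In p lp -> L p \/ p = (x, s x) -> s (fst p) = snd p) /\
    forall i, In i li -> G s i).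
  { intros lp li Hlp Hli; split.
    - intros p Hp [Lp| ->]; [apply Hagree; auto|reflexivity].
    - intros i Hi; apply HG; auto. }
  destruct (s x) eqn:Esx.
  - apply (H1 s); apply s_meets; auto using incl_appl, incl_refl.
  - apply (H2 s); apply s_meets; auto using incl_appr, incl_refl.
Qed.

Lemma compactness : exists s, forall i, G s i.
Proof.
  destruct (@classical_sets.Zorn_bigcup (V * bool)%type finitely_consistent)
    as [M [HM M_max]].
  { intros F HF F_chain; apply finitely_consistent_chain_union; assumption. }
  assert (M_total : forall x, exists v, M (x, v)).
  { intros x. destruct (finitely_consistent_extend M x HM) as [v Hv].
    apply NNPP; intros Hnot. refine (M_max _ (conj _ _) Hv).
    - intros p Mp; now left.
    - intros Hsub. apply Hnot; exists v; apply Hsub; now right. }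
  pose (f x := epsilon (inhabits true) (fun v => M (x, v))).
  assert (Mf : forall x, M (x, f x)) by (intros x; exact (epsilon_spec _ _ (M_total x))).
  exists f; intros i.
  destruct (HM [i] (map (fun x => (x, f x)) (support i))) as [s [Hagree HG]].
  apply (G_local s); [|apply HG; now left].
  intros x Hx; apply (Hagree (x, f x)); [|apply Mf].
  apply (in_map (fun y => (y, f y))), Hx.
Qed.

End Compactness.

Section FiniteFixpoint.
Variables (T : Type) (lower : T -> T -> Prop).
Hypothesis lower_irrefl : forall x, ~ lower x x.
Hypothesis lower_trans : forall x y z, lower x y -> lower y z -> lower x z.

Lemma list_has_maximal (l : list T) :
  l <> [] -> exists2 m, In m l & forall x, In x l -> ~ lower m x.
Proof.
  induction l as [|y l IH]; intros Hne; [congruence|].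
  destruct l as [|z l].
  - exists y; [now left|]. intros x [<-|[]]; apply lower_irrefl.
  - destruct IH as [m Hm m_max]; [congruence|].
    destruct (classic (lower m y)) as [Hmy|Hmy].
    + exists y; [now left|]. intros x [<-|Hx]; [apply lower_irrefl|].
      intros Hyx; apply (m_max x Hx); eauto.
    + exists m; [now right|]. intros x [<-|Hx]; auto.
Qed.

Variable P : (T -> bool) -> T -> Prop.
Hypothesis P_ext :
  forall s t x, (forall y, lower y x -> s y = t y) -> P s x -> P t x.

Lemma P_ext_iff s t x : (forall y, lower y x -> s y = t y) -> P s x <-> P t x.
Proof. intros Hst; split; apply P_ext; [|symmetry]; auto. Qed.

Let eq_dec (x y : T) : {x = y} + {x <> y} := excluded_middle_informative (x = y).

(* A [lower]-maximal element of [l] is decided last: no other constraint in [l]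
   reads its value. *)
Lemma exists_fixpoint_on_list (l : list T) :
  exists s, forall x, In x l -> (s x = true <-> P s x).
Proof.
  induction l as [l IH] using
    (well_founded_induction (Wf_nat.well_founded_ltof _ (@length T))).
  destruct (classic (l = [])) as [->|Hne]; [exists (fun _ => true); intros x []|].
  destruct (list_has_maximal l Hne) as [m Hm m_max].
  destruct (IH (remove eq_dec m l) (remove_length_lt eq_dec _ _ Hm)) as [s Hs].
  pose (t x := if eq_dec x m
                then (if excluded_middle_informative (P s m) then true else false)
                else s x).
  assert (t_other : forall x, x <> m -> t x = s x).
  { intros x Hx; unfold t; destruct (eq_dec x m); congruence. }
  exists t; intros x Hx.
  destruct (eq_dec x m) as [->|Hxm].
  - rewrite (P_ext_iff t s m).
    + unfold t; destruct (eq_dec m m) as [_|]; [|congruence].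
      destruct (excluded_middle_informative (P s m)); split; auto; congruence.
    + intros z Hz; apply t_other; intros ->; exact (lower_irrefl _ Hz).
  - rewrite t_other, (P_ext_iff t s x) by
      (auto; intros z Hz; apply t_other; intros ->; exact (m_max x Hx Hz)).
    apply Hs, in_in_remove; auto.
Qed.

End FiniteFixpoint.

Section Cf15Construction.
Variables (A : Type) (R : A -> A -> Prop).

Definition same_scc (a b : A) : Prop := reach R a b /\ reach R b a.

Lemma same_scc_refl a : same_scc a a.
Proof. split; apply rt_refl. Qed.

Lemma same_scc_sym a b : same_scc a b -> same_scc b a.
Proof. intros [Hab Hba]; split; assumption. Qed.

Lemma same_scc_trans a b c : same_scc a b -> same_scc b c -> same_scc a c.
Proof. intros [Hab Hba] [Hbc Hcb]; split; eapply rt_trans; eauto. Qed.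

Lemma is_SCC_same_scc X b : is_SCC R X -> X b -> forall a, X a <-> same_scc a b.
Proof.
  intros [r Hr] Xb a. rewrite Hr. apply Hr in Xb as [Hrb Hbr].
  split; intros [H1 H2]; split; eapply rt_trans; eauto.
Qed.

(* Depends on [b] only through its SCC (scc_enum_same), which makes
   [scc_index] injective on each SCC. *)
Definition scc_enum (b : A) : nat -> A :=
  epsilon (inhabits (fun _ => b))
    (fun e => forall a, same_scc a b -> exists k, e k = a).

Definition scc_index (a : A) : nat :=
  epsilon (inhabits 0) (fun k => scc_enum a k = a).

Section Finitary.
Variable attackers : A -> list A.
Hypothesis attackers_spec : forall b a, R a b -> In a (attackers b).

Fixpoint ancestors (n : nat) (b : A) : list A :=
  match n with
  | 0 => [b]
  | S n => flat_map attackers (ancestors n b)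
  end.

Lemma reach_ancestors a b : reach R a b -> exists n, In a (ancestors n b).
Proof.
  intros Hab; apply clos_rt_rt1n in Hab.
  induction Hab as [a|a c b Hac _ [n Hn]]; [now exists 0; left|].
  exists (S n); apply in_flat_map; eauto.
Qed.

Lemma ancestors_countable b :
  exists e : nat -> A, forall a, reach R a b -> exists k, e k = a.
Proof.
  exists (fun k => nth (snd (of_nat k)) (ancestors (fst (of_nat k)) b) b).
  intros a Hab.
  destruct (reach_ancestors a b Hab) as [n Hn].
  destruct (In_nth _ _ b Hn) as [i [_ Hi]].
  exists (to_nat (n, i)); rewrite cancel_of_to; exact Hi.
Qed.

Lemma scc_enum_spec b a : same_scc a b -> exists k, scc_enum b k = a.
Proof.
  revert a; unfold scc_enum; apply epsilon_spec.
  destruct (ancestors_countable b) as [e He].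
  exists e; intros a [Hab _]; exact (He a Hab).
Qed.

Lemma scc_enum_same a b : same_scc a b -> scc_enum a = scc_enum b.
Proof.
  intros Hab. unfold scc_enum.
  replace (fun e : nat -> A => forall c, same_scc c a -> exists k, e k = c)
    with (fun e : nat -> A => forall c, same_scc c b -> exists k, e k = c).
  - apply epsilon_inh_irrelevance. exists (scc_enum b); apply scc_enum_spec.
  - apply functional_extensionality; intros e.
    apply propositional_extensionality; split; intros He c Hc; apply He;
      eauto using same_scc_trans, same_scc_sym.
Qed.

Lemma scc_enum_index a b : same_scc a b -> scc_enum b (scc_index a) = a.
Proof.
  intros Hab. rewrite <- (scc_enum_same a b Hab).
  unfold scc_index; apply (epsilon_spec _ (fun k => scc_enum a k = a)).
  apply scc_enum_spec, same_scc_refl.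
Qed.

Lemma scc_index_inj a b : same_scc a b -> scc_index a = scc_index b -> a = b.
Proof.
  intros Hab Hidx.
  rewrite <- (scc_enum_index a b Hab), Hidx.
  apply scc_enum_index, same_scc_refl.
Qed.

Definition earlier (b : A) : list A := map (scc_enum b) (seq 0 (scc_index b)).

Lemma in_earlier a b :
  same_scc a b -> scc_index a < scc_index b -> In a (earlier b).
Proof.
  intros Hab Hlt. unfold earlier.
  rewrite <- (scc_enum_index a b Hab) at 1.
  apply in_map, in_seq; lia.
Qed.

Definition scc_prec (a b : A) : Prop :=
  (reach R a b /\ ~ reach R b a) \/ (same_scc a b /\ scc_index a < scc_index b).

Lemma scc_prec_irrefl a : ~ scc_prec a a.
Proof. intros [[_ Haa]|[_ Hlt]]; [apply Haa, rt_refl|lia]. Qed.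

Lemma scc_prec_trans a b c : scc_prec a b -> scc_prec b c -> scc_prec a c.
Proof.
  intros [[Hab Hba]|[[Hab Hba] Hlt]] [[Hbc Hcb]|[[Hbc Hcb] Hlt']].
  - left; split; [eapply rt_trans; eauto|intros Hca; apply Hba; eapply rt_trans; eauto].
  - left; split; [eapply rt_trans; eauto|intros Hca; apply Hba; eapply rt_trans; eauto].
  - left; split; [eapply rt_trans; eauto|intros Hca; apply Hcb; eapply rt_trans; eauto].
  - right; split; [split; eapply rt_trans; eauto|lia].
Qed.

Definition influences (a b : A) : Prop :=
  (R a b /\ ~ same_scc a b) \/ (same_scc a b /\ scc_index a < scc_index b).

Lemma influences_scc_prec a b : influences a b -> scc_prec a b.
Proof.
  intros [[Hab Hn]|Hearly]; [left|right; exact Hearly].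
  split; [apply rt_step, Hab|intros Hba; apply Hn; split; [apply rt_step|]; assumption].
Qed.

Lemma influences_in_support a b : influences a b -> In a (attackers b ++ earlier b).
Proof.
  intros [[Hab _]|[Hab Hlt]]; apply in_or_app; [left|right].
  - apply attackers_spec, Hab.
  - apply in_earlier; assumption.
Qed.

Definition eligible (s : A -> bool) (b : A) : Prop :=
  ~ R b b /\
  (forall a, R a b -> ~ same_scc a b -> s a = false) /\
  (forall a, same_scc a b -> scc_index a < scc_index b -> s a = true ->
     ~ R a b /\ ~ R b a).

Lemma eligible_ext s t b :
  (forall a, influences a b -> s a = t a) -> eligible s b -> eligible t b.
Proof.
  intros Hst [Hbb [Hout Hin]]; split; [exact Hbb|split].
  - intros a Hab Hn; rewrite <- Hst by (left; auto); auto.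
  - intros a Hab Hlt Ha; apply Hin; auto; rewrite Hst by (right; auto); exact Ha.
Qed.

Lemma exists_eligible_fixpoint : exists s, forall b, s b = true <-> eligible s b.
Proof.
  apply (compactness A A (fun s b => s b = true <-> eligible s b)
                     (fun b => b :: attackers b ++ earlier b)).
  - intros s t b Hst Hs.
    assert (Hinf : forall a, influences a b -> s a = t a)
      by (intros a Ha; apply Hst; right; apply influences_in_support, Ha).
    rewrite <- (Hst b (or_introl eq_refl)), Hs.
    split; apply eligible_ext; [|intros a Ha; symmetry]; auto.
  - apply (exists_fixpoint_on_list A scc_prec scc_prec_irrefl scc_prec_trans eligible).
    intros s t b Hst; apply eligible_ext.
    intros a Ha; apply Hst, influences_scc_prec, Ha.
Qed.

Section EligibleFixpoint.
Variable s : A -> bool.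
Hypothesis s_fixpoint : forall b, s b = true <-> eligible s b.

Lemma fixpoint_conflict_free : conflict_free R (fun b => s b = true).
Proof.
  intros a b Ha Hb Hab.
  destruct (proj1 (s_fixpoint a) Ha) as [Haa [_ Ha_in]].
  destruct (proj1 (s_fixpoint b) Hb) as [_ [Hb_out Hb_in]].
  destruct (classic (same_scc a b)) as [Hsame|Hn];
    [|rewrite (Hb_out a Hab Hn) in Ha; discriminate].
  destruct (Compare_dec.lt_eq_lt_dec (scc_index a) (scc_index b)) as [[Hlt|Heq]|Hlt].
  - exact (proj1 (Hb_in a Hsame Hlt Ha) Hab).
  - rewrite (scc_index_inj a b Hsame Heq) in Haa, Hab. exact (Haa Hab).
  - exact (proj2 (Ha_in b (same_scc_sym _ _ Hsame) Hlt Hb) Hab).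
Qed.

Lemma fixpoint_naive_in_scc X :
  is_SCC R X ->
  naive_in R (fun b => X b /\ ~ D R (fun b => s b = true) X b)
             (fun b => s b = true /\ X b).
Proof.
  intros HX.
  assert (Hout : forall a b, X b -> ~ X a -> ~ same_scc a b)
    by (intros a b Xb Xa Hab; apply Xa, (is_SCC_same_scc X b HX Xb), Hab).
  split; [split|].
  - intros b [Hb Xb]; split; [exact Xb|].
    intros [_ [a [Ha [Xa Hab]]]].
    destruct (proj1 (s_fixpoint b) Hb) as [_ [Hb_out _]].
    rewrite (Hb_out a Hab (Hout a b Xb Xa)) in Ha; discriminate.
  - intros a b [Ha _] [Hb _] _ _; exact (fixpoint_conflict_free a b Ha Hb).
  - intros T [HTY HTcf] HST b Tb.
    destruct (HTY b Tb) as [Xb HDb]; split; [|exact Xb].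
    apply s_fixpoint; split; [|split].
    + exact (HTcf b b Tb Tb (HTY b Tb) (HTY b Tb)).
    + intros a Hab Hn; destruct (s a) eqn:Ha; [|reflexivity].
      exfalso; apply HDb; split; [exact Xb|].
      exists a; split; [exact Ha|split; [|exact Hab]].
      intros Xa; apply Hn, (is_SCC_same_scc X b HX Xb), Xa.
    + intros a Hab _ Ha.
      assert (Ta : T a)
        by (apply HST; split; [|apply (is_SCC_same_scc X b HX Xb)]; assumption).
      split; intros Hatt; [apply (HTcf a b)|apply (HTcf b a)]; auto.
Qed.

Lemma fixpoint_cf15 : cf15 R (fun b => s b = true).
Proof.
  split; [exact fixpoint_conflict_free|intros X HX; exact (fixpoint_naive_in_scc X HX)].
Qed.

End EligibleFixpoint.
End Finitary.
End Cf15Construction.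

Theorem theorem4 (A : Type) (R : A -> A -> Prop) :
  finitary R -> exists S : set A, cf15 R S.
Proof.
  intros R_finitary.
  destruct (choice _ R_finitary) as [attackers attackers_spec].
  destruct (exists_eligible_fixpoint A R attackers attackers_spec) as [s s_fixpoint].
  exists (fun b => s b = true).
  exact (fixpoint_cf15 A R attackers attackers_spec s s_fixpoint).
Qed.
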